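(* Let $A\in GL(4,\mathbb{R})$ satisfy condition (E) (defined in the context). \begin{enumerate} \item If the matrix $A^2$ also satisfies condition (E), then $(\det A)^2=1$. \item If $(\det A)^2=1$, then there exists $k\in S^1$ such that $A$ is $k$-congruent; moreover, either such a $k$ is unique, or $A$ is $k$-congruent for every $k\in S^1$. \end{enumerate} Furthermore, let $A_1,A_2\in GL(4,\mathbb{R})$ be $k_1$-congruent and $k_2$-congruent respectively, with $k_1,k_2\in S^1$, and suppose $k_1$ is uniquely determined (i.e. $A_1$ is $k$-congruent only for $k=k_1$). If $A_1A_2$ (resp. $A_2A_1$) is $k$-congruent for some $k\in S^1$, then $A_1A_2$ (resp. $A_2A_1$) is $k_1$-congruent.
   Context: For $A\in GL(4,\mathbb{R})$ write in block form $A=\begin{pmatrix} a_{00} & \mathbf{a_h}\\ \mathbf{a_v}^t & \hat A\end{pmatrix}$, $A^{-1}=\begin{pmatrix} \tilde a_{00} & \mathbf{\tilde a_h}\\ \mathbf{\tilde a_v}^t & \tilde A\end{pmatrix}$, with $a_{00},\tilde a_{00}\in\mathbb{R}$, $\mathbf{a_h},\mathbf{a_v},\mathbf{\tilde a_h},\mathbf{\tilde a_v}\in\mathbb{R}^3$ (row vectors) and $\hat A,\tilde A$ $3\times3$ matrices. Condition (E) on $A$ means: $\tilde a_{00}=a_{00}$ and $\tilde A=\hat A^t$. Let $S^1=\mathbb{R}\cup\{\omega\}$ (the extended real line with $+\infty$ and $-\infty$ identified to one point $\omega$). For $k\in\mathbb{R}$ let $I^{(k)}=\mathrm{diag}(k,1,1,1)$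 and $O^{(k)}(4,\mathbb{R})=\{A\in GL(4,\mathbb{R}) : (\det A)^2=1,\ A^tI^{(k)}A=I^{(k)}\}$; and $O^{(\omega)}(4,\mathbb{R})=\{A\in GL(4,\mathbb{R}) : A^t\in O^{(0)}(4,\mathbb{R})\}$. A matrix $A$ is called $k$-congruent if $A\in O^{(k)}(4,\mathbb{R})$. *)

From HB Require Import structures.
From mathcomp Require Import all_boot all_order all_algebra.
From mathcomp Require Import reals.
Set Implicit Arguments. Unset Strict Implicit. Unset Printing Implicit Defensive.
Import Order.TTheory GRing.Theory Num.Theory.
Local Open Scope ring_scope.

(* Indices 0..3; index 0 is the distinguished one, 1..3 are lift ord0 i. *)

Definition hatblock (R : realType) (A : 'M[R]_4) : 'M[R]_3 :=
  \matrix_(i < 3, j < 3) A (lift ord0 i) (lift ord0 j).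

(* Condition (E): tilde a_00 = a_00 and tilde A = (hat A)^T, where tilde
   denotes the corresponding block of A^{-1}. *)
Definition condE (R : realType) (A : 'M[R]_4) : Prop :=
  (invmx A) ord0 ord0 = A ord0 ord0 /\ hatblock (invmx A) = (hatblock A)^T.

(* S^1 = R u {omega}: Some k is the real k, None is the point omega. *)
Definition S1 (R : realType) := option R.

Definition Ik (R : realType) (k : R) : 'M[R]_4 :=
  diag_mx (\row_(i < 4) (if i == ord0 then k else 1)).

Definition in_Ok (R : realType) (k : R) (A : 'M[R]_4) : Prop :=
  A \in unitmx /\ (\det A) ^+ 2 = 1 /\ A^T *m Ik k *m A = Ik k.

Definition kcongruent (R : realType) (k : S1 R) (A : 'M[R]_4) : Prop :=
  match k with
  | Some r => in_Ok r A
  | None => A \in unitmx /\ in_Ok 0 A^T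
  end.

(* O^(k), k real, is the isometry group of I^(k) = diag(k,1,1,1) (with
   (det)^2 = 1), and transposition maps O^(k) onto O^(1/k), exchanging 0 and
   omega.  Since I^(k) is affine in k, a matrix lying in two of these groups
   preserves e_0 e_0^T, so its off-diagonal blocks vanish and it lies in
   {+-1} x O(3), hence in all of them.

   Under condition (E) write A = [a x; y M] and A^-1 = [a x'; y' M^T].  If
   x = 0 (resp. y = 0), A is omega- (resp. 0-) congruent.  Otherwise the
   symmetric rank-one matrices y x' = 1 - M M^T and y' x = 1 - M^T M force
   x' = l y^T and y' = m x^T, and then
   A^T I^(m) A = I^(m) + (1 - m l) [y^T y, 0; M^T y, 0].  So A is m-congruent
   once m l = 1, which follows from (det A)^2 = 1 by taking determinants, and
   from condition (E) for A^2 by comparing lower-right blocks of A^-2.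

   For the products, A_1 A_2 (A_1 A_2)^-1 = 1 has k_1-, k_2- and k-congruent
   factors; if the labels are distinct, all three factors are block diagonal.
   Rotating, inverting and transposing the product permute and dualize the
   labels, leaving two configurations: three real labels, where comparing the
   forms gives a rank-one identity that kills the first row of a factor, and
   the labels 0, omega, r. *)

From HB Require Import structures.
From mathcomp Require Import all_boot all_order all_algebra.
From mathcomp Require Import reals.
From mathcomp Require Import ring.
From Stdlib Require Import Classical.
Set Implicit Arguments. Unset Strict Implicit. Unset Printing Implicit Defensive.
Import Order.TTheory GRing.Theory Num.Theory.
Local Open Scope ring_scope.

Lemma mulmx_tr_eq0 (R : realType) m n (A : 'M[R]_(m, n)) : A *m A^T = 0 -> A = 0.
Proof.
move=> AAt0; apply/matrixP => i j; rewrite mxE.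
have /eqP := congr1 (fun B : 'M[R]_m => B i i) AAt0.
rewrite !mxE psumr_eq0 => [/allP/(_ j (mem_index_enum _))|k _].
  by rewrite mxE mulf_eq0 orbb => /eqP.
by rewrite mxE -expr2 sqr_ge0.
Qed.

Lemma trmx_mul_eq0 (R : realType) m n (A : 'M[R]_(m, n)) : A^T *m A = 0 -> A = 0.
Proof. by rewrite -{2}[A]trmxK => /mulmx_tr_eq0 /(congr1 trmx); rewrite trmxK trmx0. Qed.

Lemma cV_norm_neq0 (R : realType) n (u : 'cV[R]_n) : u != 0 -> (u^T *m u) 0 0 != 0.
Proof.
apply: contra => /eqP u0; apply/eqP/trmx_mul_eq0.
by rewrite [u^T *m u]mx11_scalar u0 raddf0.
Qed.

Lemma mul_cV_rV_neq0 (R : realType) n p (u : 'cV[R]_n) (v : 'rV[R]_p) :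
  u != 0 -> v != 0 -> u *m v != 0.
Proof.
move=> u0; apply: contra => /eqP uv0.
have := congr1 (mulmx u^T) uv0; rewrite mulmxA mulmx0 [u^T *m u]mx11_scalar mul_scalar_mx.
by move/eqP; rewrite scaler_eq0 (negPf (cV_norm_neq0 u0)).
Qed.

Lemma rank_one_sym (R : realType) n (u : 'cV[R]_n) (v : 'rV[R]_n) :
  u != 0 -> (u *m v)^T = u *m v -> exists l : R, v = l *: u^T.
Proof.
move=> u0 uv_sym.
have /(congr1 (mulmx^~ u)) := uv_sym; rewrite /= trmx_mul -!mulmxA.
rewrite [u^T *m u]mx11_scalar [v *m u]mx11_scalar !mul_mx_scalar.
set N := (u^T *m u) 0 0; set s := (v *m u) 0 0 => hvu.
have N0 : N != 0 := cV_norm_neq0 u0.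
exists (s / N); apply: (can_inj trmxK); rewrite linearZ /= trmxK.
by rewrite mulrC -scalerA -hvu scalerA mulVf // scale1r.
Qed.

Lemma det_sqr_orthogonal (R : comNzRingType) n (M : 'M[R]_n) :
  M^T *m M = 1%:M -> \det M ^+ 2 = 1.
Proof. by move=> hM; rewrite expr2 -{1}det_tr -det_mulmx hM det1. Qed.

Lemma unitmx_of_det_sqr (R : fieldType) n (A : 'M[R]_n) : \det A ^+ 2 = 1 -> A \in unitmx.
Proof. by move=> d2; rewrite unitmxE unitfE -sqrf_eq0 d2 oner_eq0. Qed.

Lemma invmx_mul (R : comUnitRingType) n (A B : 'M[R]_n) :
  A \in unitmx -> B \in unitmx -> invmx (A *m B) = invmx B *m invmx A.
Proof.
move=> uA uB; have uAB : A *m B \in unitmx by rewrite unitmx_mul uA uB.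
have ABX : A *m B *m (invmx B *m invmx A) = 1%:M by rewrite mulmxA mulmxK // mulmxV.
by rewrite -[LHS]mulmx1 -ABX mulmxA mulVmx // mul1mx.
Qed.

Lemma mulmx1_invmx (R : comUnitRingType) n (A B : 'M[R]_n) : A *m B = 1%:M -> invmx A = B.
Proof.
by move=> AB1; have [uA _] := mulmx1_unit AB1; rewrite -[RHS](mulKmx uA) AB1 mulmx1.
Qed.

Lemma mulmx3_eq1_rot (R : comUnitRingType) n (A B C : 'M[R]_n) :
  A *m B *m C = 1%:M -> B *m C *m A = 1%:M.
Proof. by rewrite -mulmxA => /mulmx1C. Qed.

Ltac block_simpl := do 3 rewrite ?tr_block_mx ?mulmx_block ?trmx0 ?tr_scalar_mx
  ?mulmx0 ?mul0mx ?addr0 ?add0r ?mulmx1 ?mul1mx.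

Section Congruence.
Variable R : realType.
Local Notation M4 := 'M[R]_(1 + 3).
Implicit Types (A B C : M4) (k : S1 R).

(* [Ik r], restated at the type 'M_(1 + 3) on which the block lemmas apply. *)
Definition Ik13 (r : R) : M4 := block_mx r%:M 0 0 1%:M.

Lemma IkE (r : R) : @eq M4 (Ik r) (Ik13 r).
Proof.
apply/matrixP => i j.
case: (split_ordP i) => i' ->; case: (split_ordP j) => j' ->;
  rewrite ?block_mxEul ?block_mxEur ?block_mxEdl ?block_mxEdr !mxE.
- by rewrite (ord1 i') (ord1 j').
- by rewrite -[lshift 3 i' == _]val_eqE /= (ord1 i') mulr0n.
- by rewrite -[rshift 1 i' == _]val_eqE /= (ord1 j') mulr0n.
- by rewrite -!val_eqE /= eqn_add2l.
Qed.

Definition E00 : M4 := block_mx 1%:M 0 0 0.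

Lemma Ik13_shift (r s : R) : Ik13 s = Ik13 r + (s - r) *: E00.
Proof.
rewrite /Ik13 /E00 scale_block_mx add_block_mx !scaler0 !addr0 scalemx1.
by rewrite -raddfD /= addrC subrK.
Qed.

Lemma Ik13_mulV (r : R) : r != 0 -> Ik13 r *m Ik13 r^-1 = 1%:M.
Proof.
by move=> r0; rewrite /Ik13; block_simpl; rewrite -scalar_mxM mulfV // -scalar_mx_block.
Qed.

Lemma kcongruent_realE (r : R) A :
  kcongruent (Some r) A <-> \det A ^+ 2 = 1 /\ A^T *m Ik13 r *m A = Ik13 r.
Proof.
rewrite /= /in_Ok IkE; split=> [[_ //]|[d2 hA]].
by split=> //; apply: unitmx_of_det_sqr.
Qed.

Lemma kcongruent_omegaE A : kcongruent None A <-> kcongruent (Some 0) A^T.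
Proof. by split=> [[]//|hA]; split=> //; rewrite -unitmx_tr; case: hA. Qed.

Lemma kcongruent_unit k A : kcongruent k A -> A \in unitmx.
Proof. by case: k => [r [] | []]. Qed.

Definition dual k : S1 R :=
  if k is Some r then (if r == 0 then None else Some r^-1) else Some 0.

Lemma dualK : involutive dual.
Proof.
case=> [r|] /=; last by rewrite eqxx.
case: eqP => [->|r0] //=.
by rewrite invr_eq0; case: eqP => // _; rewrite invrK.
Qed.

Lemma kcongruent_tr k A : kcongruent k A -> kcongruent (dual k) A^T.
Proof.
case: k => [r|]; last by move/kcongruent_omegaE.
have [->|r0] := eqVneq r 0.
  by rewrite /= eqxx => hA; apply/kcongruent_omegaE; rewrite trmxK.
rewrite /= (negPf r0) => /kcongruent_realE[d2 hA]; apply/kcongruent_realE.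
split; first by rewrite det_tr.
have /mulmx1C : A^T *m Ik13 r *m (A *m Ik13 r^-1) = 1%:M by rewrite mulmxA hA Ik13_mulV.
rewrite !mulmxA trmxK => hAV.
by rewrite -[LHS]mulmx1 -(Ik13_mulV r0) !mulmxA hAV mul1mx.
Qed.

Lemma kcongruent_mul k A B : kcongruent k A -> kcongruent k B -> kcongruent k (A *m B).
Proof.
have mulS r C D : kcongruent (Some r) C -> kcongruent (Some r) D ->
    kcongruent (Some r) (C *m D).
  move=> /kcongruent_realE[dC hC] /kcongruent_realE[dD hD]; apply/kcongruent_realE.
  split; first by rewrite det_mulmx exprMn dC dD mulr1.
  suff -> : (C *m D)^T *m Ik13 r *m (C *m D) = D^T *m (C^T *m Ik13 r *m C) *m D.
    by rewrite hC.
  by rewrite trmx_mul !mulmxA.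
case: k => [r|]; first exact: mulS.
move=> /kcongruent_omegaE hA /kcongruent_omegaE hB; apply/kcongruent_omegaE.
by rewrite trmx_mul; apply: mulS.
Qed.

Lemma kcongruent_inv k A : kcongruent k A -> kcongruent k (invmx A).
Proof.
have invS r C : kcongruent (Some r) C -> kcongruent (Some r) (invmx C).
  move=> /kcongruent_realE[dC hC]; have uC := unitmx_of_det_sqr dC.
  apply/kcongruent_realE; split; first by rewrite det_inv exprVn dC invr1.
  rewrite -[in LHS]hC !mulmxA -trmx_mul mulmxV // trmx1 mul1mx.
  by rewrite -mulmxA mulmxV // mulmx1.
case: k => [r|]; first exact: invS.
by move=> /kcongruent_omegaE hA; apply/kcongruent_omegaE; rewrite trmx_inv; apply: invS.
Qed.

Lemma Ik13_conj_shift (r s : R) A : A^T *m Ik13 r *m A = Ik13 r ->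
  A^T *m Ik13 s *m A = Ik13 r + (s - r) *: (A^T *m E00 *m A).
Proof. by move=> hA; rewrite (Ik13_shift r s) mulmxDr mulmxDl hA -scalemxAr -scalemxAl. Qed.

Definition allcongruent A := forall k, kcongruent k A.

Lemma allcongruent_block_diag (a : 'M[R]_1) (M : 'M[R]_3) :
  a 0 0 ^+ 2 = 1 -> M^T *m M = 1%:M -> allcongruent (block_mx a 0 0 M).
Proof.
have congS r (b : 'M[R]_1) (N : 'M[R]_3) : b 0 0 ^+ 2 = 1 -> N^T *m N = 1%:M ->
    kcongruent (Some r) (block_mx b 0 0 N).
  move=> hb hN; apply/kcongruent_realE; split.
    by rewrite det_ublock exprMn det_mx11 hb det_sqr_orthogonal // mul1r.
  rewrite /Ik13 [b]mx11_scalar; block_simpl; rewrite hN -!scalar_mxM.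
  by rewrite mulrC mulrA -expr2 hb mul1r.
move=> ha hM [r|]; first exact: congS.
apply/kcongruent_omegaE; rewrite tr_block_mx !trmx0; apply: congS; first by rewrite mxE.
by rewrite trmxK; apply: mulmx1C.
Qed.

Lemma allcongruent_ursubmx0 (r : R) A :
  kcongruent (Some r) A -> ursubmx A = 0 -> allcongruent A.
Proof.
move=> hA ur0; move: hA; rewrite -[A]submxK ur0.
move: (ulsubmx A) (dlsubmx A) (drsubmx A) => c q H /kcongruent_realE[d2].
rewrite /Ik13; block_simpl; case/eq_block_mx => _ _ hq /mulmx1C hH.
have q0 : q = 0 by rewrite -[q]mul1mx -hH -mulmxA hq mulmx0.
move: d2; rewrite q0 det_ublock exprMn det_mx11 => d2.
have hH' : H^T *m H = 1%:M by apply: mulmx1C.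
by apply: allcongruent_block_diag => //; move: d2; rewrite det_sqr_orthogonal // mulr1.
Qed.

Lemma kcongruent0_blocks A : kcongruent (Some 0) A ->
  dlsubmx A = 0 /\ (drsubmx A)^T *m drsubmx A = 1%:M.
Proof.
rewrite -[A]submxK => /kcongruent_realE[_]; rewrite /Ik13 !block_mxKdl !block_mxKdr.
rewrite raddf0; block_simpl.
by case/eq_block_mx => /trmx_mul_eq0.
Qed.

Lemma kcongruent_omega_ursubmx A : kcongruent None A -> ursubmx A = 0.
Proof.
move=> /kcongruent_omegaE/kcongruent0_blocks[/eqP + _].
by rewrite -trmx_ursub trmx_eq0 => /eqP.
Qed.

Lemma allcongruent_of_two j l A : j != l -> kcongruent j A -> kcongruent l A ->
  allcongruent A.
Proof.
wlog [r ->] : j l / exists r, j = Some r.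
  move=> wlog_real; case: j => [r|]; first by apply: wlog_real; exists r.
  case: l => [s|] // jl hA hB; rewrite eq_sym in jl.
  by apply: (wlog_real (Some s) None) => //; exists s.
case: l => [s|] rl hr; last first.
  by move/kcongruent_omega_ursubmx; apply: allcongruent_ursubmx0 hr.
move=> hs; apply: (allcongruent_ursubmx0 hr).
move: hr hs => /kcongruent_realE[_ hAr] /kcongruent_realE[_ hAs].
have hE : A^T *m E00 *m A = E00.
  apply: (scalerI (a := s - r)); first by rewrite subr_eq0 eq_sym.
  by apply: (addrI (Ik13 r)); rewrite -Ik13_conj_shift // hAs (Ik13_shift r).
move: hE; rewrite -[A]submxK /E00; block_simpl; rewrite block_mxKur.
by case/eq_block_mx => _ _ _ /trmx_mul_eq0.
Qed.

Lemma kcongruent0_ublock (a : 'M[R]_1) (u : 'rV[R]_3) (N : 'M[R]_3) :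
  (a *m a) 0 0 = 1 -> N^T *m N = 1%:M -> kcongruent (Some 0) (block_mx a u 0 N).
Proof.
rewrite [a]mx11_scalar -scalar_mxM mxE eqxx mulr1n -expr2 => ha hN.
apply/kcongruent_realE; split.
  by rewrite det_ublock exprMn det_mx11 mxE eqxx mulr1n ha det_sqr_orthogonal // mul1r.
by rewrite /Ik13 raddf0; block_simpl; rewrite hN.
Qed.

Section ConditionE.
Variables (a : 'M[R]_1) (x x' : 'rV[R]_3) (y y' : 'cV[R]_3) (M : 'M[R]_3).
Local Notation A := (block_mx a x y M : M4).
Local Notation B := (block_mx a x' y' M^T : M4).
Hypotheses (AB1 : A *m B = 1%:M) (BA1 : B *m A = 1%:M).

Let AB_blocks : a *m a + x *m y' = 1%:M /\ y *m x' + M *m M^T = 1%:M.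
Proof.
by move: AB1; block_simpl; rewrite [1%:M]scalar_mx_block => /eq_block_mx[? _ _ ?].
Qed.

Let BA_blocks : a *m a + x' *m y = 1%:M /\ y' *m x + M^T *m M = 1%:M.
Proof.
by move: BA1; block_simpl; rewrite [1%:M]scalar_mx_block => /eq_block_mx[? _ _ ?].
Qed.

Lemma condE_x0_kcongruent : x = 0 -> kcongruent None A.
Proof.
move=> x0; apply/kcongruent_omegaE; rewrite x0 tr_block_mx trmx0.
case: AB_blocks BA_blocks => + _ [_]; rewrite x0 mul0mx mulmx0 !addr0 add0r => aa MM.
apply: kcongruent0_ublock; last by rewrite trmxK; apply: mulmx1C.
by rewrite -trmx_mul aa trmx1 mxE eqxx.
Qed.

Lemma condE_y0_kcongruent : y = 0 -> kcongruent (Some 0) A.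
Proof.
move=> y0; rewrite y0.
case: AB_blocks BA_blocks => [_] + [+ _]; rewrite y0 mul0mx mulmx0 add0r addr0 => MM aa.
by apply: kcongruent0_ublock; [rewrite aa mxE eqxx | apply: mulmx1C].
Qed.

Lemma condE_parallel : x != 0 -> y != 0 ->
  exists l m : R, x' = l *: y^T /\ y' = m *: x^T.
Proof.
move=> x0 y0; case: AB_blocks BA_blocks => [_ hAB] [_ hBA].
have sym_of_id (N : 'M[R]_3) (P : 'M[R]_3) : P + N *m N^T = 1%:M -> P^T = P.
  by move=> hP; rewrite -(addrK (N *m N^T) P) hP linearB /= trmx_mul trmxK trmx1.
have [l hl] := rank_one_sym y0 (sym_of_id _ _ hAB).
have xT0 : x^T != 0 by rewrite trmx_eq0.
have [m hm] : exists m : R, y'^T = m *: x^T^T.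
  apply: rank_one_sym xT0 _; rewrite -trmx_mul trmxK.
  by apply/esym/(sym_of_id M^T); rewrite trmxK.
by exists l, m; split=> //; rewrite -[y']trmxK hm trmxK linearZ.
Qed.

Variables l m : R.
Hypotheses (hx' : x' = l *: y^T) (hy' : y' = m *: x^T).

Lemma condE_form : A^T *m Ik13 m *m A =
  Ik13 m + (1 - m * l) *: block_mx (y^T *m y) 0 (M^T *m y) 0.
Proof.
have defect : Ik13 m *m A = B^T *m Ik13 m + (1 - m * l) *: block_mx 0 0 y 0.
  rewrite hx' hy' /Ik13; block_simpl; rewrite scale_block_mx add_block_mx.
  rewrite !scaler0 !addr0 !linearZ /= !trmxK [a]mx11_scalar tr_scalar_mx.
  rewrite !mul_scalar_mx !mul_mx_scalar scalerA -scalerDl addrC subrK scale1r.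
  by rewrite !scale_scalar_mx mulrC.
rewrite -mulmxA defect mulmxDr mulmxA -trmx_mul BA1 trmx1 mul1mx -scalemxAr.
by block_simpl.
Qed.

Lemma condE_det : m * \det A ^+ 2 = m + (1 - m * l) * (y^T *m y) 0 0.
Proof.
have := congr1 determinant condE_form.
rewrite !det_mulmx det_tr /Ik13 scale_block_mx add_block_mx !scaler0 !addr0 add0r.
rewrite !det_lblock det1 !mulr1 !det_mx11 !mxE eqxx !mulr1n => <-.
by rewrite mulrAC -expr2 mulrC.
Qed.

Lemma condE_parallel_kcongruent : m * l = 1 -> kcongruent (Some m) A.
Proof.
move=> ml1; apply/kcongruent_realE; split; last first.
  by rewrite condE_form ml1 subrr scale0r addr0.
have m0 : m != 0 by apply: contra_eq_neq ml1 => ->; rewrite mul0r eq_sym oner_neq0.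
by apply: (mulfI m0); rewrite condE_det ml1 subrr mul0r addr0 mulr1.
Qed.

Lemma condE_det_sqr_ml1 : \det A ^+ 2 = 1 -> y != 0 -> m * l = 1.
Proof.
move=> d2 y0; have := condE_det; rewrite d2 mulr1 -{1}[m]addr0 => /addrI/esym/eqP.
by rewrite mulf_eq0 (negPf (cV_norm_neq0 y0)) orbF subr_eq0 => /eqP/esym.
Qed.

Lemma condE_sqr_ml1 : x != 0 -> y != 0 ->
  drsubmx (B *m B) = (drsubmx (A *m A))^T -> m * l = 1.
Proof.
move=> x0 y0; rewrite hx' hy' !mulmx_block !block_mxKdr linearD /= !trmx_mul.
rewrite -scalemxAl -scalemxAr scalerA => /addIr/eqP.
rewrite -subr_eq0 -{2}[x^T *m y^T]scale1r -scalerBl scaler_eq0 subr_eq0.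
by rewrite (negPf (mul_cV_rV_neq0 _ _)) ?trmx_eq0 // orbF => /eqP.
Qed.

End ConditionE.

Lemma hatblockE (C : 'M[R]_4) : hatblock C = drsubmx (C : M4).
Proof. by apply/matrixP => i j; rewrite !mxE; congr (C _ _); apply: val_inj. Qed.

Lemma invmx_condE A : condE A ->
  invmx A = block_mx (ulsubmx A) (ursubmx (invmx A)) (dlsubmx (invmx A)) (drsubmx A)^T.
Proof.
case=> h00 hhat; rewrite -[LHS]submxK -!hatblockE -hhat; congr block_mx.
apply/matrixP => i j; rewrite !ord1 !mxE.
by rewrite (_ : lshift 3 (0 : 'I_1) = ord0 :> 'I_4) //; apply: val_inj.
Qed.

Lemma condE_kcongruent_exists A : A \in unitmx -> condE A ->
  \det A ^+ 2 = 1 \/ condE (A *m A) -> exists k, kcongruent k A.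
Proof.
move=> uA hE hyp.
have {hyp} : \det A ^+ 2 = 1 \/
    drsubmx (invmx A *m invmx A) = (drsubmx (A *m A))^T.
  case: hyp => [|[_]]; first by left.
  by rewrite !hatblockE invmx_mul //; right.
have := mulmxV uA; have := mulVmx uA; rewrite (invmx_condE hE).
move: (ursubmx (invmx A)) (dlsubmx (invmx A)) => x' y'.
rewrite -[A]submxK !block_mxKul !block_mxKdr.
move: (ulsubmx A) (ursubmx A) (dlsubmx A) (drsubmx A) => a x y M BA1 AB1 hyp.
have [x0|x0] := eqVneq x 0; first by exists None; apply: condE_x0_kcongruent AB1 BA1 x0.
have [y0|y0] := eqVneq y 0; first by exists (Some 0); apply: condE_y0_kcongruent AB1 BA1 y0.
have [l [m [hl hm]]] := condE_parallel AB1 BA1 x0 y0.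
exists (Some m); apply: (condE_parallel_kcongruent BA1 hl hm).
case: hyp => [d2|sq]; first exact: (condE_det_sqr_ml1 BA1 hl hm d2 y0).
exact: condE_sqr_ml1 hl hm x0 y0 sq.
Qed.

Lemma Ik13_comb_ursubmx0 (s t u v : R) (G N : M4) :
  Ik13 s + u *: (G^T *m E00 *m G) + v *: (N^T *m E00 *m N) = Ik13 t ->
  u != 0 -> t != s -> ursubmx G = 0.
Proof.
rewrite -[G]submxK -[N]submxK /Ik13 /E00; block_simpl.
rewrite !scale_block_mx !add_block_mx block_mxKur.
move: (ulsubmx G) (ursubmx G) (ulsubmx N) (ursubmx N) => c p d q.
case/eq_block_mx => e00 e01 _ e11 u0 ts; apply/matrixP => i j; rewrite ord1 mxE.
have := congr1 (fun P : 'M[R]_1 => P 0 0) e00.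
have := congr1 (fun P : 'M[R]_(1, 3) => P 0 j) e01.
have := congr1 (fun P : 'M[R]_3 => P j j) e11.
rewrite /= !mxE !big_ord1 !mxE !eqxx !mulr1n add0r -addrA => /(canRL (addKr 1)).
rewrite addNr => {}e11 {}e01 {}e00.
set C := c 0 0 in e01 e00; set D := d 0 0 in e01 e00.
set P := p 0 j in e11 e01 *; set Q := q 0 j in e11 e01.
have : u * (t - s) * P ^+ 2 = 0.
  rewrite -e00; transitivity ((u * (C * P) + v * (D * Q)) * (u * C * P - v * D * Q)
    + v * D ^+ 2 * (u * (P * P) + v * (Q * Q))); first by ring.
  by rewrite e01 e11 mul0r mulr0 addr0.
by move/eqP; rewrite !mulf_eq0 (negPf u0) subr_eq0 (negPf ts) /= orbb => /eqP.
Qed.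

Lemma ursubmx0_of_zero_omega (r : R) A B : r != 0 ->
  kcongruent (Some 0) A -> kcongruent None B -> kcongruent (Some r) (A *m B) ->
  ursubmx A = 0.
Proof.
move=> r0 hA hB /kcongruent_realE[_].
have [dlA0 hG] := kcongruent0_blocks hA; have urB0 := kcongruent_omega_ursubmx hB.
have [_] := kcongruent0_blocks (iffLR (kcongruent_omegaE B) hB).
rewrite -trmx_drsub trmxK => /mulmx1C hH.
rewrite -[A]submxK -[B]submxK dlA0 urB0 /Ik13; block_simpl.
case/eq_block_mx => _ _ _; rewrite block_mxKur.
set x := ursubmx A; set G := drsubmx A; set H := drsubmx B.
have -> : (G *m H)^T *m (G *m H) = 1%:M.
  by rewrite trmx_mul mulmxA -(mulmxA _ _ G) hG mulmx1 hH.
rewrite -{2}[1%:M]add0r => /addIr/eqP.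
rewrite mul_mx_scalar -scalemxAl scaler_eq0 (negPf r0) => /eqP/trmx_mul_eq0 xH0.
by rewrite -[x]mulmx1 -(mulmx1C hH) mulmxA xH0 mul0mx.
Qed.

Lemma ursubmx0_of_real_mul (r s t : R) A C : t != r -> s != r ->
  kcongruent (Some r) A -> kcongruent (Some t) C -> kcongruent (Some s) (C *m A) ->
  ursubmx A = 0.
Proof.
move=> tr sr /kcongruent_realE[_ hA] /kcongruent_realE[_ hC] /kcongruent_realE[_ hCA].
apply: (@Ik13_comb_ursubmx0 r s (t - r) (s - t) A (C *m A)); rewrite ?subr_eq0 //.
rewrite -(Ik13_conj_shift t hA) -[RHS]hCA.
have -> : (C *m A)^T *m E00 *m (C *m A) = A^T *m (C^T *m E00 *m C) *m A.
  by rewrite trmx_mul !mulmxA.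
rewrite scalemxAl scalemxAr -mulmxDl -mulmxDr -(Ik13_conj_shift s hC).
by rewrite trmx_mul !mulmxA.
Qed.

Lemma allcongruent_mul A B : allcongruent A -> allcongruent B -> allcongruent (A *m B).
Proof. by move=> hA hB k; apply: kcongruent_mul. Qed.

Lemma allcongruent_inv A : allcongruent A -> allcongruent (invmx A).
Proof. by move=> hA k; apply: kcongruent_inv. Qed.

Lemma allcongruent_of_inv A : allcongruent (invmx A) -> allcongruent A.
Proof. by rewrite -{2}[A]invmxK; apply: allcongruent_inv. Qed.

Lemma allcongruent_of_tr A : allcongruent A^T -> allcongruent A.
Proof. by move=> hA k; rewrite -[A]trmxK -[k]dualK; apply: kcongruent_tr. Qed.

Definition rigid_triple (a b c : S1 R) : Prop :=
  forall A B C, kcongruent a A -> kcongruent b B -> kcongruent c C ->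
  A *m B *m C = 1%:M -> [/\ allcongruent A, allcongruent B & allcongruent C].

Lemma rigid_tripleP a b c : b != c ->
  (forall A B C, kcongruent a A -> kcongruent b B -> kcongruent c C ->
     A *m B *m C = 1%:M -> allcongruent A) ->
  rigid_triple a b c.
Proof.
move=> bc allA A B C hA hB hC ABC; have hA' := allA _ _ _ hA hB hC ABC.
have uA := kcongruent_unit hA; have uB := kcongruent_unit hB.
have hC' : allcongruent C.
  apply: allcongruent_of_two bc _ hC.
  rewrite -(mulmx1_invmx ABC) invmx_mul //.
  by apply: kcongruent_mul; apply: kcongruent_inv; [exact: hB | exact: hA'].
split=> //; have /mulmx3_eq1_rot/mulmx1_invmx <- := mulmx3_eq1_rot ABC.
rewrite invmx_mul ?(kcongruent_unit hC) //.
by apply: allcongruent_mul; apply: allcongruent_inv.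
Qed.

Lemma rigid_triple_rot a b c : rigid_triple b c a -> rigid_triple a b c.
Proof.
move=> h A B C hA hB hC /mulmx3_eq1_rot BCA.
by have [] := h _ _ _ hB hC hA BCA.
Qed.

Lemma rigid_triple_rev a b c : rigid_triple c b a -> rigid_triple a b c.
Proof.
move=> h A B C hA hB hC ABC.
have uA := kcongruent_unit hA; have uB := kcongruent_unit hB.
have uC := kcongruent_unit hC.
have CBA : invmx C *m invmx B *m invmx A = 1%:M.
  by rewrite -invmx_mul // -invmx_mul ?unitmx_mul ?uB ?uC // mulmxA ABC invmx1.
have [] := h _ _ _ (kcongruent_inv hC) (kcongruent_inv hB) (kcongruent_inv hA) CBA.
by move=> /allcongruent_of_inv ? /allcongruent_of_inv ? /allcongruent_of_inv.
Qed.

Lemma rigid_triple_dual a b c :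
  rigid_triple (dual c) (dual b) (dual a) -> rigid_triple a b c.
Proof.
move=> h A B C hA hB hC ABC.
have CBA : C^T *m B^T *m A^T = 1%:M by rewrite -!trmx_mul mulmxA ABC trmx1.
have [] := h _ _ _ (kcongruent_tr hC) (kcongruent_tr hB) (kcongruent_tr hA) CBA.
by move=> /allcongruent_of_tr ? /allcongruent_of_tr ? /allcongruent_of_tr.
Qed.

Lemma rigid_triple_real (r s t : R) : r != s -> s != t -> t != r ->
  rigid_triple (Some r) (Some s) (Some t).
Proof.
move=> rs st tr; apply: rigid_tripleP => [|A B C hA hB hC ABC]; first by [].
have CAB : C *m A *m B = 1%:M by do 2 apply: mulmx3_eq1_rot.
have hCA : kcongruent (Some s) (C *m A).
  by rewrite -[C *m A](mulmx1_invmx (mulmx1C CAB)); apply: kcongruent_inv.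
apply: (allcongruent_ursubmx0 hA).
by apply: (ursubmx0_of_real_mul _ _ hA hC hCA); rewrite // eq_sym.
Qed.

Lemma rigid_triple_zero_omega (r : R) : r != 0 -> rigid_triple (Some 0) None (Some r).
Proof.
move=> r0; apply: rigid_tripleP => [|A B C hA hB hC ABC]; first by [].
have hAB : kcongruent (Some r) (A *m B).
  by rewrite -(mulmx1_invmx (mulmx1C ABC)); apply: kcongruent_inv.
exact: (allcongruent_ursubmx0 hA (ursubmx0_of_zero_omega r0 hA hB hAB)).
Qed.

Lemma rigid_triple_omega_last (r s : R) : r != s -> rigid_triple (Some r) (Some s) None.
Proof.
move=> rs; have [r0|r0] := eqVneq r 0.
  rewrite r0 in rs *; apply: rigid_triple_rev; do 2 apply: rigid_triple_rot.
  by apply: rigid_triple_zero_omega; rewrite eq_sym.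
have [s0|s0] := eqVneq s 0.
  by rewrite s0; apply: rigid_triple_rot; apply: rigid_triple_zero_omega.
apply: rigid_triple_dual; rewrite /= (negPf r0) (negPf s0).
apply: rigid_triple_real; first by rewrite eq_sym invr_eq0.
  by rewrite (inj_eq invr_inj) eq_sym.
by rewrite invr_eq0.
Qed.

Lemma rigid_triple_distinct a b c : a != b -> b != c -> c != a -> rigid_triple a b c.
Proof.
case: a b c => [r|] [s|] [t|] //= ab bc ca.
- exact: rigid_triple_real.
- exact: rigid_triple_omega_last.
- by do 2 apply: rigid_triple_rot; apply: rigid_triple_omega_last.
- by apply: rigid_triple_rot; apply: rigid_triple_omega_last.
Qed.

Lemma kcongruent_det_sqr k A : kcongruent k A -> \det A ^+ 2 = 1.
Proof. by case: k => [r [_ []] | [_ [_ []]]]; rewrite ?det_tr. Qed.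

Lemma kcongruent_factorl k1 k2 k A1 A2 :
  kcongruent k1 A1 -> kcongruent k2 A2 -> kcongruent k (A1 *m A2) ->
  k2 = k1 \/ kcongruent k A1.
Proof.
move=> h1 h2 h12; have [->|kk1] := eqVneq k k1; first by right.
have [->|k21] := eqVneq k2 k1; first by left.
right; have [kk2|kk2] := eqVneq k k2.
  rewrite -[A1](mulmxK (kcongruent_unit h2)) kk2.
  by apply: kcongruent_mul; [rewrite -kk2 | apply: kcongruent_inv].
have ABC : A1 *m A2 *m invmx (A1 *m A2) = 1%:M by rewrite mulmxV ?(kcongruent_unit h12).
rewrite eq_sym in k21; rewrite eq_sym in kk2.
by have [] := rigid_triple_distinct k21 kk2 kk1 h1 h2 (kcongruent_inv h12) ABC.
Qed.

Lemma kcongruent_factorr k1 k2 k A1 A2 :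
  kcongruent k1 A1 -> kcongruent k2 A2 -> kcongruent k (A2 *m A1) ->
  k2 = k1 \/ kcongruent k A1.
Proof.
move=> h1 h2 h21; have u1 := kcongruent_unit h1; have u2 := kcongruent_unit h2.
have := kcongruent_inv h21; rewrite invmx_mul //.
case/(kcongruent_factorl (kcongruent_inv h1) (kcongruent_inv h2)) => [->|]; first by left.
by move/kcongruent_inv; rewrite invmxK; right.
Qed.

End Congruence.

Theorem lemma2p3 (R : realType) :
  (* (1) *)
  (forall A : 'M[R]_4, A \in unitmx -> condE A ->
     condE (A *m A) -> (\det A) ^+ 2 = 1)
  /\
  (* (2) *)
  (forall A : 'M[R]_4, A \in unitmx -> condE A -> (\det A) ^+ 2 = 1 ->
     (exists k : S1 R, kcongruent k A) /\
     ((exists! k : S1 R, kcongruent k A) \/ (forall k : S1 R, kcongruent k A)))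
  /\
  (* (3) *)
  (forall (A1 A2 : 'M[R]_4) (k1 k2 : S1 R),
     A1 \in unitmx -> A2 \in unitmx ->
     kcongruent k1 A1 -> kcongruent k2 A2 ->
     (forall k : S1 R, kcongruent k A1 -> k = k1) ->
     ((exists k : S1 R, kcongruent k (A1 *m A2)) -> kcongruent k1 (A1 *m A2)) /\
     ((exists k : S1 R, kcongruent k (A2 *m A1)) -> kcongruent k1 (A2 *m A1))).
Proof.
split; [|split].
- move=> A uA hE hE2.
  by have [k /kcongruent_det_sqr] := condE_kcongruent_exists uA hE (or_intror hE2).
- move=> A uA hE d2; have [k hk] := condE_kcongruent_exists uA hE (or_introl d2).
  split; first by exists k.
  have [[k' hk' k'k]|none] := classic (exists2 k', kcongruent k' A & k' != k).
    by right; apply: allcongruent_of_two k'k hk' hk.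
  left; exists k; split=> // k' hk'; apply/esym/eqP/negPn/negP => k'k.
  by apply: none; exists k'.
- move=> A1 A2 k1 k2 _ _ h1 h2 uniq; split=> -[k hk].
  + case: (kcongruent_factorl h1 h2 hk) => [e21|/uniq <- //].
    by apply: kcongruent_mul h1 _; rewrite -e21.
  + case: (kcongruent_factorr h1 h2 hk) => [e21|/uniq <- //].
    by apply: kcongruent_mul _ h1; rewrite -e21.
Qed.
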